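(* Let $G$ be a finite group, and let $L(G)$ be its subgroup graph. Then $L(G)$ is a regular graph if and only if $G$ is cyclic and the order of $G$ is square-free.
   Context: The subgroup graph $L(G)$ of a finite group $G$ is the (undirected, simple) graph whose vertices are all subgroups of $G$, where two vertices $H_1$ and $H_2$ are joined by an edge if and only if one of them, say $H_1$, satisfies $H_1 < H_2$ and there is no subgroup $K$ of $G$ with $H_1 < K < H_2$ (i.e. $H_1$ is a maximal subgroup of $H_2$). A graph is regular if all its vertices have the same degree. *)

From mathcomp Require Import all_boot all_fingroup all_solvable.
Set Implicit Arguments. Unset Strict Implicit. Unset Printing Implicit Defensive.
Local Open Scope group_scope.

(* The subgroup graph L(G): vertices are the subgroups H of G
   (H : {group gT} with H \subset G); H1 -- H2 is an edge iff one of them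
   is a maximal subgroup of the other (a proper subgroup with no subgroup
   strictly in between). *)

Definition covers (gT : finGroupType) (H1 H2 : {group gT}) : bool :=
  (H1 \proper H2) &&
  [forall K : {group gT}, ~~ ((H1 \proper K) && (K \proper H2))].

Definition subgraph_edge (gT : finGroupType) (H1 H2 : {group gT}) : bool :=
  covers H1 H2 || covers H2 H1.

Definition subgraph_vertices (gT : finGroupType) (G : {group gT})
  : {set {group gT}} := [set H : {group gT} | H \subset G].

Definition subgraph_degree (gT : finGroupType) (G H : {group gT}) : nat :=
  #|[set K : {group gT} | (K \subset G) && subgraph_edge H K]|.

Definition subgraph_regular (gT : finGroupType) (G : {group gT}) : Prop :=
  forall H K : {group gT}, H \in subgraph_vertices G -> K \in subgraph_vertices G ->
    subgraph_degree G H = subgraph_degree G K.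

Definition squarefree (n : nat) : bool :=
  [forall p : 'I_n.+1, prime p ==> ~~ (p * p %| n)%N].

(* If some element of G has order divisible by p^2, let y be a p-element of
   maximal order, D = <[y]> and E = <[y ^+ p]>.  E is the only lower cover of
   D, while every upper cover K of D is the join of D with an upper cover of E
   lying outside D: when K does not normalize D, D is a self-normalizing
   abelian Sylow subgroup of K, and Burnside's transfer argument yields a
   nontrivial normal subgroup of K meeting D trivially.  Together with D itself
   and a maximal subgroup of E, this gives E a larger degree than D.
   Otherwise no element order is divisible by a square.  The degree of 1 is
   the number of subgroups of prime order, and a subgroup P of prime order has
   degree one more than its number of upper covers, each of the form P <*> Q
   with Q of prime order; so regularity makes Q |-> P <*> Q injective.  Two
   distinct subgroups P, Q of the same prime order p are then impossible: P <*> Q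
   would have order p^2 and contain a third subgroup of order p.  Hence G has
   at most one subgroup of each prime order, so G is cyclic of squarefree order.
   Conversely, in a cyclic group of squarefree order n the neighbours of the
   subgroup of order d are the subgroups of order d/q for the primes q | d and
   of order dq for the other primes q | n, so every degree is the number of
   prime divisors of n. *)

From mathcomp Require Import all_boot all_fingroup all_solvable ssralg.
Set Implicit Arguments. Unset Strict Implicit. Unset Printing Implicit Defensive.
Local Open Scope group_scope.
Import FiniteModule.

Section Covers.
Variable gT : finGroupType.
Implicit Types G H K L P : {group gT}.

Lemma covers_maximal H K : covers H K = maximal H K.
Proof.
apply/idP/maxgroupP=> [/andP[pHK /forallP nHK] | [pHK maxH]].
  split=> // L pLK sHL; apply/eqP; apply: contraNT (nHK L) => neLH.
  by rewrite pLK andbT properEneq eq_sym neLH.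
rewrite /covers pHK; apply/forallP=> L; apply/negP=> /andP[pHL pLK].
by have eLH := maxH L pLK (proper_sub pHL); rewrite eLH properxx in pHL.
Qed.

Lemma covers_prime_index H K : H \subset K -> prime #|K : H| -> covers H K.
Proof. by move=> sHK pr_iKH; rewrite covers_maximal p_index_maximal. Qed.

Lemma covers_card H K q :
  H \subset K -> prime q -> #|K| = (#|H| * q)%N -> covers H K.
Proof.
by move=> sHK pr_q oK; apply: covers_prime_index; rewrite // -divgS // oK mulKn.
Qed.

Lemma covers1G K : covers 1 K = prime #|K|.
Proof.
apply/idP/idP=> [|pr_K]; last by rewrite covers_prime_index ?sub1G ?indexg1.
rewrite covers_maximal => /maxgroupP[ntK max1].
have [q pr_q q_dvd_K] : exists2 q, prime q & q %| #|K|.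
  by exists (pdiv #|K|); rewrite ?pdiv_dvd // pdiv_prime // cardG_gt1 -proper1G.
have [x Kx ox] := Cauchy pr_q q_dvd_K.
have [eq_xK | ne_xK] := eqVneq (<[x]> : {set gT}) K; first by rewrite -eq_xK -orderE ox.
have px1 : <[x]> \proper K by rewrite properEneq ne_xK cycle_subG Kx.
by move: pr_q; rewrite -ox orderE (max1 _ px1 (sub1G _)) cards1.
Qed.

Lemma coversG1 K : covers K 1 = false.
Proof. by rewrite /covers properE sub1G andbF. Qed.

Lemma covers_joinE H K L :
  covers H K -> L \subset K -> ~~ (L \subset H) -> K = (H <*> L)%G.
Proof.
case/andP=> pHK /forallP nHK sLK nsLH; have sHK := proper_sub pHK.
have pHJ : H \proper H <*> L.
  by rewrite properEneq joing_subl andbT; apply: contraNneq nsLH => ->; apply: joing_subr.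
apply/val_inj/eqP; rewrite /= eq_sym eqEproper join_subG sHK sLK /=.
by apply: contra (nHK (H <*> L)%G) => pJK; rewrite pHJ.
Qed.

Lemma prime_subG_eq H K : prime #|H| -> prime #|K| -> H \subset K -> H = K.
Proof.
move=> pr_H pr_K sHK; apply/val_inj/eqP; rewrite /= eqEcard sHK /=.
by move: (cardSg sHK); rewrite dvdn_prime2 // => /eqP->.
Qed.

Lemma exists_prime_notin pi K :
  ~~ pi.-group K -> exists2 q, q \in primes #|K| & q \notin pi.
Proof. by rewrite /pgroup /pnat cardG_gt0 => /allPn. Qed.

Lemma covers_exists H K : H \proper K -> exists2 L : {group gT}, covers H L & L \subset K.
Proof.
move=> pHK; have [L /mingroupP[pHL minL] sLK] :=
  @mingroup_exists _ (fun L : {group gT} => H \proper L) K pHK.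
exists L => //; rewrite /covers pHL; apply/forallP=> M; apply/negP=> /andP[pHM pML].
by have eML := minL M pHM (proper_sub pML); rewrite eML properxx in pML.
Qed.

Definition upper_covers G H := [set K : {group gT} | (K \subset G) && covers H K].
Definition lower_covers H := [set K : {group gT} | covers K H].
Definition atoms G := [set P : {group gT} | (P \subset G) && prime #|P|].

Lemma subgraph_degreeE G H : H \subset G ->
  subgraph_degree G H = #|upper_covers G H| + #|lower_covers H|.
Proof.
move=> sHG; rewrite -cardsUI.
have -> : upper_covers G H :&: lower_covers H = set0.
  apply/setP=> K; rewrite !inE; apply/negP=> /andP[/andP[_ /andP[pHK _]] /andP[pKH _]].
  by move: (proper_trans pHK pKH); rewrite properxx.
rewrite cards0 addn0; apply: eq_card => K; rewrite !inE /subgraph_edge.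
case cKH: (covers K H); rewrite ?orbF ?orbT //=.
by case/andP: cKH => /proper_sub/subset_trans->.
Qed.

Lemma upper_covers1 G : upper_covers G 1 = atoms G.
Proof. by apply/setP=> K; rewrite !inE covers1G. Qed.

Lemma lower_covers1 : lower_covers 1 = set0.
Proof. by apply/setP=> K; rewrite !inE coversG1. Qed.

Lemma lower_covers_prime P : prime #|P| -> lower_covers P = [set 1%G].
Proof.
move=> pr_P; apply/setP=> K; rewrite !inE.
apply/idP/eqP=> [/andP[pKP _] | ->]; last by rewrite covers1G.
apply/val_inj/eqP; rewrite /= trivg_card1.
have /primeP[_ dvdP] := pr_P; case/orP: (dvdP _ (cardSg (proper_sub pKP))) => //.
by move/eqP=> oK; move: (proper_card pKP); rewrite oK ltnn.
Qed.

Lemma lower_covers_neq0 H : H :!=: 1 -> lower_covers H != set0.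
Proof.
rewrite -proper1G => ntH.
have [M maxM _] := @maxgroup_exists _ (fun M : {group gT} => M \proper H) 1%G ntH.
by apply/set0Pn; exists M; rewrite inE covers_maximal.
Qed.

Lemma atomsD1_nsub G P Q : P \in atoms G -> Q \in atoms G :\ P -> ~~ (Q \subset P).
Proof.
rewrite !inE => /andP[_ pr_P] /and3P[neQP _ pr_Q].
by apply: contraNN neQP => sQP; rewrite (prime_subG_eq pr_Q pr_P sQP).
Qed.

Lemma subgraph_degree1 G : subgraph_degree G 1 = #|atoms G|.
Proof. by rewrite subgraph_degreeE ?sub1G // upper_covers1 lower_covers1 cards0 addn0. Qed.

Lemma subgraph_degree_atom G P :
  P \in atoms G -> subgraph_degree G P = #|upper_covers G P|.+1.
Proof.
by rewrite inE => /andP[sPG pr_P]; rewrite subgraph_degreeE // lower_covers_prime // cards1 addn1.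
Qed.

End Covers.

Section CyclePowerSubgroup.
Variables (gT : finGroupType) (p : nat) (y : gT).
Hypotheses (pr_p : prime p) (p_y : p.-elt y) (p_dvd_y : p %| #[y]).

Lemma order_expp : (#[y ^+ p] * p)%N = #[y].
Proof. by rewrite orderXdiv // divnK. Qed.

Lemma index_cycle_expp : #|<[y]> : <[y ^+ p]>| = p.
Proof.
apply/eqP; rewrite -(eqn_pmul2l (cardG_gt0 <[y ^+ p]>)) Lagrange ?cycleX //.
by rewrite -!orderE order_expp.
Qed.

Lemma covers_cycle_expp : covers <[y ^+ p]>%G <[y]>%G.
Proof. by rewrite covers_prime_index ?cycleX ?index_cycle_expp. Qed.

Lemma proper_cycle_sub_expp (H : {group gT}) :
  H \proper <[y]> -> H \subset <[y ^+ p]>.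
Proof.
move=> pHy; have sHy := proper_sub pHy.
have [[|k] oHy] := p_natP (pnat_dvd (dvdn_indexg <[y]> H) p_y).
  by move/eqP: oHy; rewrite indexg_eq1 => syH; rewrite properE syH andbF in pHy.
rewrite -(cardSg_cyclic (cycle_cyclic y)) ?cycleX //.
rewrite -(dvdn_pmul2r (prime_gt0 pr_p)) -orderE order_expp orderE.
by rewrite -(Lagrange sHy) oHy expnS mulnA dvdn_mulr.
Qed.

Lemma lower_covers_cycle : lower_covers <[y]>%G = [set <[y ^+ p]>%G].
Proof.
apply/setP=> H; rewrite !inE; apply/idP/eqP=> [|->]; last exact: covers_cycle_expp.
rewrite covers_maximal => /maxgroupP[pHy maxH].
have /andP[pEy _] := covers_cycle_expp.
by apply/val_inj/esym/(maxH _ pEy)/proper_cycle_sub_expp.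
Qed.

End CyclePowerSubgroup.

Section SelfNormalizingAbelianSylow.
Variables (gT : finGroupType) (p : nat) (K D : {group gT}).
Hypotheses (sylD : p.-Sylow(K) D) (abD : abelian D) (nDD : 'N_K(D) \subset D).

Let sDK : D \subset K := pHall_sub sylD.

(* D and D :^ x are Sylow subgroups of 'C_K[a ^ x], so x = n * c with n in
   'N_K(D) <= D, which centralizes a, and c centralizing a ^ x. *)
Lemma abelian_Sylow_conj_fixed a x :
  a \in D -> x \in K -> a ^ x \in D -> a ^ x = a.
Proof.
move=> Da Kx Dax; set b := a ^ x; pose C := 'C_K[b].
have sCK : C \subset K := subsetIl _ _.
have sDC : D \subset C.
  by rewrite subsetI sDK; apply/subsetP=> d Dd; apply/cent1P/(centsP abD).
have sDxC : D :^ x \subset C.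
  rewrite subsetI -{1}(conjGid Kx) conjSg sDK /=; apply/subsetP=> d Dxd.
  have abDx : abelian (D :^ x) by rewrite abelianJ.
  by apply/cent1P; apply: (centsP abDx) => //; rewrite memJ_conjg.
have sylDC : p.-Sylow(C) D := pHall_subl sDC sCK sylD.
have sylDxC : p.-Sylow(C) (D :^ x)%G by apply: pHall_subl sDxC sCK _; rewrite pHallJ.
have [c /setIP[Kc /cent1P cbc] defDx] := Sylow_trans sylDC sylDxC.
have NDxc : x * c^-1 \in 'N_K(D).
  by rewrite inE groupM ?groupV //=; apply/normP; rewrite conjsgM defDx -conjsgM mulgV conjsg1.
have fixa : a ^ (x * c^-1) = a.
  by rewrite /conjg -(centsP abD _ (subsetP nDD _ NDxc) _ Da) mulKg.
have fixb : b ^ c^-1 = b by rewrite conjgE invgK mulgA cbc mulgK.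
by rewrite -/b -fixb /b -conjgM.
Qed.

(* M is the kernel of the transfer of K into D, which is x |-> x ^+ #|K : D|
   on D; #|K : D| is coprime to #|D|, and M = 1 would embed K into the abelian
   group D, making D normal in K. *)
Lemma normal_complement_abelian_Sylow :
  D \proper K -> exists M : {group gT}, [/\ M <| K, M :&: D = 1 & M :!=: 1].
Proof.
move=> pDK; have abA : abelian (idm D @* D) by rewrite im_idm.
pose V := transfer_morphism K abA.
have VD g : g \in D -> V g = (fmod abA g *+ #|K : D|)%R.
  move=> Dg; have Kg := subsetP sDK g Dg.
  have trX := transversalP (rcosets_cycle_partition sDK Kg).
  rewrite /= (transfer_cycle_expansion sDK abA Kg trX).
  rewrite -(sum_index_rcosets_cycle sDK Kg trX) -GRing.sumrMnr.
  apply: eq_bigr => x Xx /=.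
  have Kx : x \in K := subsetP (transversal_sub trX) x Xx.
  set n := #|<[g]> : D :* x|.
  have Dgn : g ^+ n \in D by rewrite groupX.
  have Dgnx : (g ^+ n) ^ x^-1 \in D.
    by have := mulg_exp_card_rcosets D g x; rewrite mem_rcoset conjgE invgK mulgA.
  rewrite (abelian_Sylow_conj_fixed Dgn (groupVr Kx) Dgnx) /=.
  change (fmod abA (g ^+ n) = (fmod abA g *+ n)%R).
  by apply: fmodX; rewrite /= im_idm.
exists ('ker V)%G; split; first exact: ker_normal.
  apply/trivgP/subsetP => g /setIP[kerVg Dg]; rewrite inE -order_eq1 -dvdn1.
  have Ag : g \in idm D @* D by rewrite im_idm.
  have gi1 : g ^+ #|K : D| = 1.
    by rewrite -(fmodK abA (groupX _ Ag)) fmodX // -VD // (mker kerVg).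
  have /and3P[_ pD p'iKD] := sylD.
  have /eqP<- : coprime #[g] #|K : D|.
    exact: coprime_dvdl (order_dvdG Dg) (pnat_coprime pD p'iKD).
  by rewrite dvdn_gcd dvdnn order_dvdn gi1 eqxx.
apply: contraTneq pDK => kerV1.
have injV : 'injm V by rewrite /= kerV1.
have abK : abelian K.
  rewrite -(injm_abelian injV (subxx K)); apply/centsP => u _ v _.
  exact: GRing.addrC.
have sKN : K \subset 'N_K(D) by rewrite subsetI subxx sub_abelian_norm.
by rewrite properE (subset_trans sKN nDD) andbF.
Qed.

End SelfNormalizingAbelianSylow.

Section MaximalPElement.
Variables (gT : finGroupType) (G : {group gT}) (p : nat) (y : gT).
Hypotheses (pr_p : prime p) (p_y : p.-elt y) (pp_dvd_y : p * p %| #[y]).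
Hypotheses (Gy : y \in G) (max_y : forall x, x \in G -> p.-elt x -> #[x] <= #[y]).

Implicit Types H K L M : {group gT}.

Local Notation D := <[y]>%G.
Local Notation E := <[y ^+ p]>%G.
Let p_dvd_y : p %| #[y] := dvdn_trans (dvdn_mulr p (dvdnn p)) pp_dvd_y.
Let pD : p.-group D := p_y.
Let sED : E \subset D := cycleX y p.
Let cED : covers E D := covers_cycle_expp pr_p p_dvd_y.
Let proper_sub_E := proper_cycle_sub_expp pr_p p_y p_dvd_y.

Lemma cover_over_cycle_expp_join K M :
    D \subset K -> M \subset K -> commute E M -> M :&: D \subset E ->
    ~~ (M \subset D) ->
  exists L : {group gT}, [/\ covers E L, L \subset K & ~~ (L \subset D)].
Proof.
move=> sDK sMK cEM sMDE nsMD; set H := (E <*> M)%G.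
have /andP[pED _] := cED.
have nEy : y \notin E.
  by apply: contraL pED; rewrite -cycle_subG properE => ->; rewrite andbF.
have pEH : E \proper H.
  rewrite properEneq joing_subl andbT; apply: contraNneq nsMD => defH.
  by rewrite (subset_trans _ sED) // defH joing_subr.
have nsDH : ~~ (D \subset H).
  rewrite /H /= cycle_subG /= comm_joingE //; apply: contra nEy => /mulsgP[e m Ee Mm def_y].
  have Dm : m \in D by rewrite -[m](mulKg e) -def_y groupM ?groupV ?cycle_id ?(subsetP sED e Ee).
  by rewrite {1}def_y groupM // (subsetP sMDE) // inE Mm.
have [L cEL sLH] := covers_exists pEH.
have sHK : H \subset K by rewrite join_subG (subset_trans sED sDK) sMK.
exists L; split=> //; first exact: subset_trans sLH sHK.
apply: contra nsDH => sLD; have /andP[pEL _] := cEL.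
suff -> : D = L by [].
apply/val_inj/eqP; rewrite /= eq_sym eqEproper sLD; apply: contraL pEL => /proper_sub_E sLE.
by rewrite properE sLE andbF.
Qed.

Let chED : E \char D := cycle_subgroup_char sED.

Lemma cover_over_cycle_expp_normalizing K :
    D \subset K -> K \subset 'N(D) -> ~~ p.-group K ->
  exists L : {group gT}, [/\ covers E L, L \subset K & ~~ (L \subset D)].
Proof.
move=> sDK nDK /exists_prime_notin[q]; rewrite mem_primes inE => /and3P[pr_q _ q_dvd_K] neqp.
have [x Kx ox] := Cauchy pr_q q_dvd_K.
have q'D : ~~ (q %| #|D|) by apply: contra neqp => /(pgroupP pD q pr_q).
apply: (@cover_over_cycle_expp_join K <[x]>%G) => //=; rewrite ?cycle_subG //.
- by apply/esym/normC/(char_norm_trans chED); rewrite cycle_subG (subsetP nDK).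
- by rewrite coprime_TIg ?sub1G // -orderE ox prime_coprime.
by apply: contra q'D => Dx; rewrite -ox order_dvdG.
Qed.

Lemma cover_over_cycle_expp_pgroup K :
    K \subset G -> p.-group K -> covers D K ->
  exists L : {group gT}, [/\ covers E L, L \subset K & ~~ (L \subset D)].
Proof.
move=> sKG pK; rewrite covers_maximal => maxD.
have nDK : K \subset 'N(D) := normal_norm (p_maximal_normal pK maxD).
have [sDK [x Kx nDx]] := properP (maxgroupp maxD).
apply: (@cover_over_cycle_expp_join K <[x]>%G) => //=; rewrite ?cycle_subG //.
  by apply/esym/normC/(char_norm_trans chED); rewrite cycle_subG (subsetP nDK).
have [/proper_sub_E // | ] := boolP ((<[x]> :&: D)%G \proper D).
rewrite properE subsetIr /= negbK => sDx; have {}sDx := subset_trans sDx (subsetIl _ _).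
have pDx : D \proper <[x]>.
  by rewrite properEneq sDx andbT; apply: contraNneq nDx => ->; apply: cycle_id.
have := leq_trans (proper_card pDx) (max_y (subsetP sKG x Kx) (mem_p_elt pK Kx)).
by rewrite ltnn.
Qed.

Lemma cover_over_cycle_expp_nonnormal K :
    covers D K -> ~~ (K \subset 'N(D)) ->
  exists L : {group gT}, [/\ covers E L, L \subset K & ~~ (L \subset D)].
Proof.
rewrite covers_maximal => maxD nDK; have [pDK maxDK] := maxgroupP maxD.
have sDK := proper_sub pDK.
have p'K : ~~ p.-group K.
  by apply: contra nDK => pK; apply: normal_norm (p_maximal_normal pK maxD).
have sylD : p.-Sylow(K) D.
  have [S sylS sDS] := Sylow_superset sDK pD.
  have pSK : S \proper K.
    rewrite properEneq (pHall_sub sylS) andbT.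
    by apply: contraNneq p'K => <-; apply: pHall_pgroup sylS.
  by rewrite -(group_inj (maxDK S pSK sDS)).
have sNK_D : 'N_K(D) \subset D.
  have [pNK | ] := boolP ('N_K(D) \proper K).
    by rewrite (maxDK _ pNK) // subsetI sDK normG.
  by rewrite properE subsetIl subsetI subxx (negbTE nDK).
have [M [nsMK tiMD ntM]] :=
  normal_complement_abelian_Sylow sylD (cycle_abelian y) sNK_D pDK.
apply: (cover_over_cycle_expp_join sDK (normal_sub nsMK)).
- exact/normC/(subset_trans (subset_trans sED sDK))/normal_norm.
- by rewrite tiMD sub1G.
by apply: contraNN ntM => sMD; rewrite -tiMD (setIidPl sMD).
Qed.

Lemma cover_over_cycle_expp K :
    K \subset G -> covers D K ->
  exists L : {group gT}, [/\ covers E L, L \subset K & ~~ (L \subset D)].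
Proof.
move=> sKG cDK; have /andP[/proper_sub sDK _] := cDK.
have [pK | p'K] := boolP (p.-group K); first exact: cover_over_cycle_expp_pgroup.
have [nDK | ] := boolP (K \subset 'N(D)); first exact: cover_over_cycle_expp_normalizing.
exact: cover_over_cycle_expp_nonnormal.
Qed.

(* K |-> L is inverted by L |-> D <*> L, and D is a further upper cover of E. *)
Lemma card_upper_covers_cycle_lt : #|upper_covers G D| < #|upper_covers G E|.
Proof.
pose S := [set L in upper_covers G E | ~~ (L \subset D)].
have sUD_S : upper_covers G D \subset (fun L => D <*> L)%G @: S.
  apply/subsetP=> K; rewrite inE => /andP[sKG cDK].
  have [L [cEL sLK nsLD]] := cover_over_cycle_expp sKG cDK.
  by apply/imsetP; exists L; [rewrite !inE (subset_trans sLK sKG) cEL | apply: covers_joinE].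
have sDS_UE : D |: S \subset upper_covers G E.
  apply/subsetP=> K; rewrite !inE => /orP[/eqP-> | /andP[] //].
  by rewrite cycle_subG Gy cED.
apply: leq_trans (subset_leq_card sDS_UE); rewrite cardsU1 !inE subxx andbF add1n ltnS.
exact: leq_trans (subset_leq_card sUD_S) (leq_imset_card _ _).
Qed.

Lemma subgraph_degree_cycle_lt : subgraph_degree G D < subgraph_degree G E.
Proof.
have sDG : D \subset G by rewrite cycle_subG.
have ntE : E :!=: 1.
  rewrite -cardG_gt1 -orderE (leq_trans (prime_gt1 pr_p)) // dvdn_leq //.
  by rewrite -(dvdn_pmul2r (prime_gt0 pr_p)) order_expp.
rewrite !subgraph_degreeE ?(subset_trans sED) // (lower_covers_cycle pr_p p_y p_dvd_y) cards1 addn1.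
rewrite -addn1 leq_add ?card_upper_covers_cycle_lt // lt0n cards_eq0.
exact: lower_covers_neq0.
Qed.

End MaximalPElement.

Lemma regular_element_orders (gT : finGroupType) (G : {group gT}) :
  subgraph_regular G -> forall x q, x \in G -> prime q -> ~~ (q * q %| #[x]).
Proof.
move=> regG x q Gx pr_q; apply/negP=> qq_dvd_x.
have Gxq : x.`_q \in G by rewrite groupX.
pose qeltG := [pred z | (z \in G) && q.-elt z].
have [y /andP[Gy q_y] max_y] :=
  @arg_maxnP gT x.`_q qeltG (fun z => #[z]) (introT andP (conj Gxq (p_elt_constt q x))).
have qq_dvd_y : q * q %| #[y].
  have [j oy] := p_natP q_y.
  have le2 : 2 <= logn q #[x] by rewrite -pfactor_dvdn.
  have : q ^ logn q #[x] <= #[y].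
    by rewrite -p_part -order_constt; apply: max_y; rewrite /= Gxq p_elt_constt.
  by rewrite oy leq_exp2l ?prime_gt1 // => /(leq_trans le2)/(dvdn_exp2l q).
have max_y' z : z \in G -> q.-elt z -> #[z] <= #[y] by move=> Gz q_z; apply: max_y; rewrite /= Gz.
have := subgraph_degree_cycle_lt pr_q q_y qq_dvd_y Gy max_y'.
by rewrite (regG <[y]>%G <[y ^+ q]>%G) ?ltnn // inE cycle_subG ?groupX.
Qed.

Lemma squarefreeP n :
  0 < n -> reflect (forall p, prime p -> ~~ (p * p %| n)) (squarefree n).
Proof.
move=> n_gt0; apply: (iffP forallP) => [sqf_n p pr_p | sqf_n p]; last exact/implyP/sqf_n.
apply/negP=> pp_dvd_n; have lt_p_n : p < n.+1.
  by rewrite ltnS (leq_trans (leq_pmulr p (prime_gt0 pr_p))) // dvdn_leq.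
by have /implyP/(_ pr_p) := sqf_n (Ordinal lt_p_n); rewrite pp_dvd_n.
Qed.

Lemma order_mul_commute_prime (gT : finGroupType) p (u v : gT) :
    prime p -> #[u] = p -> #[v] = p -> commute u v -> v \notin <[u]> ->
  #[u * v] = p.
Proof.
move=> pr_p ou ov cuv nuv.
have /primeP[_ dvd_p] := pr_p.
have : #[u * v] %| p by rewrite order_dvdn expgMn // -{1}ou -ov !expg_order mulg1.
case/dvd_p/orP=> /eqP // /eqP; rewrite order_eq1 => /eqP uv1.
by move: nuv; rewrite -(mulKg u v) uv1 mulg1 groupV cycle_id.
Qed.

Section SquarefreeElementOrders.
Variables (gT : finGroupType) (G : {group gT}).
Implicit Types P Q R K : {group gT}.
Hypothesis sqf_orders : forall x q, x \in G -> prime q -> ~~ (q * q %| #[x]).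
Hypothesis regG : subgraph_regular G.

Lemma order_pelt x q : x \in G -> prime q -> q.-elt x -> x != 1 -> #[x] = q.
Proof.
move=> Gx pr_q q_x ntx; have [[|[|j]] ox] := p_natP q_x.
- by move: ntx; rewrite -order_eq1 ox eqxx.
- by rewrite ox expn1.
by move: (sqf_orders Gx pr_q); rewrite ox !expnS mulnA dvdn_mulr.
Qed.

Lemma atom_cycle x : x \in G -> prime #[x] -> <[x]>%G \in atoms G.
Proof. by move=> Gx pr_x; rewrite inE cycle_subG Gx. Qed.

Lemma upper_cover_atom_join P K :
  P \in atoms G -> K \in upper_covers G P -> exists2 Q, Q \in atoms G :\ P & K = (P <*> Q)%G.
Proof.
rewrite !inE => /andP[sPG pr_P] /andP[sKG cPK].
have [_ [z Kz nPz]] := properP (proj1 (andP cPK)).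
have Gz := subsetP sKG z Kz.
have [Q [sQK pr_Q nsQP]] :
    exists Q, [/\ Q \subset K, prime #|Q| & ~~ (Q \subset P)].
  have [p_z | p'z] := boolP (#|P|.-elt z).
    exists <[z]>%G; rewrite /= !cycle_subG Kz nPz -orderE (order_pelt Gz pr_P p_z) //.
    by apply: contraNneq nPz => ->.
  have [l] := exists_prime_notin (K := <[z]>%G) p'z.
  rewrite mem_primes inE => /and3P[pr_l _ l_dvd_z] nelP.
  have [w zw ow] := Cauchy pr_l l_dvd_z.
  exists <[w]>%G; rewrite /= -orderE ow pr_l (subset_trans _ (_ : <[z]> \subset K)) ?cycle_subG //.
  by split=> //; apply: contra nelP => /order_dvdG; rewrite ow dvdn_prime2 // inE.
exists Q; last exact: covers_joinE.
rewrite !inE (subset_trans sQK sKG) pr_Q !andbT.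
by apply: contraNneq nsQP => ->.
Qed.

(* Comparing the degrees of 1 and P: the image of Q |-> P <*> Q contains all
   upper covers of P and is no larger than their number. *)
Lemma upper_covers_atom P : P \in atoms G ->
  upper_covers G P = (fun Q => P <*> Q)%G @: (atoms G :\ P)
  /\ {in atoms G :\ P &, injective (fun Q => P <*> Q)%G}.
Proof.
move=> AP; have sPG : P \subset G by move: AP; rewrite inE => /andP[].
have sUP : upper_covers G P \subset (fun Q => P <*> Q)%G @: (atoms G :\ P).
  by apply/subsetP=> K /(upper_cover_atom_join AP)[Q AQ ->]; apply: imset_f.
have card_UP : #|upper_covers G P| = #|atoms G :\ P|.
  have := cardsD1 P (atoms G); rewrite AP add1n -subgraph_degree1.
  by rewrite (regG (H := 1%G) (K := P)) ?inE ?sub1G // subgraph_degree_atom // => -[].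
have card_im : #|(fun Q => P <*> Q)%G @: (atoms G :\ P)| = #|atoms G :\ P|.
  by apply/eqP; rewrite eqn_leq leq_imset_card -card_UP subset_leq_card.
split; last exact/imset_injP/eqP.
by apply/eqP; rewrite eqEcard sUP card_im card_UP /=.
Qed.

Lemma covers_join_atoms P Q :
  P \in atoms G -> Q \in atoms G :\ P -> covers P (P <*> Q)%G.
Proof.
move=> AP AQ; have [defUP _] := upper_covers_atom AP.
have : (P <*> Q)%G \in upper_covers G P by rewrite defUP; apply: imset_f.
by rewrite inE => /andP[].
Qed.

Lemma atom_sub_join P Q R : P \in atoms G -> Q \in atoms G :\ P ->
  R \in atoms G :\ P -> R \subset P <*> Q -> R = Q.
Proof.
move=> AP AQ AR sR_PQ; have [_ injP] := upper_covers_atom AP.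
apply: injP => //; apply/esym/covers_joinE => //; first exact: covers_join_atoms.
exact: atomsD1_nsub AR.
Qed.

Lemma join_atoms_pgroup P Q : P \in atoms G -> Q \in atoms G :\ P ->
  #|Q| = #|P| -> #|P|.-group (P <*> Q).
Proof.
move=> AP AQ oQ; have sPQ_G : P <*> Q \subset G.
  by move: AP AQ; rewrite !inE join_subG => /andP[-> _] /and3P[_ -> _].
apply/pgroupP=> l pr_l l_dvd_PQ; have [w PQw ow] := Cauchy pr_l l_dvd_PQ.
have Aw : <[w]>%G \in atoms G by rewrite atom_cycle ?(subsetP sPQ_G) ?ow.
have ow' : #|<[w]>%G| = l by rewrite /= -orderE.
rewrite inE -ow'; have [-> // | nwP] := eqVneq <[w]>%G P.
have AwP : <[w]>%G \in atoms G :\ P by rewrite in_setD1 nwP.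
by rewrite (atom_sub_join AP AQ AwP) ?oQ // cycle_subG.
Qed.

(* With P = <[u]> and Q = <[v]>, P <*> Q has order p^2, hence is abelian, and
   <[u * v]> would be a third subgroup of order p in it. *)
Lemma atoms_of_same_order P Q : P \in atoms G -> Q \in atoms G -> #|P| = #|Q| -> P = Q.
Proof.
move=> AP AQ oPQ; apply/eqP; rewrite eq_sym; apply/negPn/negP => neQP.
have AQP : Q \in atoms G :\ P by rewrite in_setD1 neQP.
have /andP[sPG pr_P] : (P \subset G) && prime #|P| by rewrite inE in AP.
have /andP[sQG pr_Q] : (Q \subset G) && prime #|Q| by rewrite inE in AQ.
set p := #|P| in pr_P oPQ.
have o_PQ : #|P <*> Q| = (p ^ 2)%N.
  have maxP : maximal P (P <*> Q)%G by rewrite -covers_maximal covers_join_atoms.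
  rewrite -(Lagrange (joing_subl P Q)).
  by rewrite (p_maximal_index (join_atoms_pgroup AP AQP (esym oPQ)) maxP).
have [u defP] := cyclicP (prime_cyclic pr_P).
have [v defQ] := cyclicP (prime_cyclic pr_Q).
have [Pu Qv] : u \in P /\ v \in Q by rewrite defP defQ !cycle_id.
have ou : #[u] = p by rewrite orderE -defP.
have ov : #[v] = p by rewrite orderE -defQ oPQ.
have PQu : u \in P <*> Q := subsetP (joing_subl P Q) u Pu.
have PQv : v \in P <*> Q := subsetP (joing_subr P Q) v Qv.
have cuv : commute u v := centsP (card_p2group_abelian pr_P o_PQ) u PQu v PQv.
have nuv : v \notin <[u]>.
  by rewrite -defP; apply: contra (atomsD1_nsub AP AQP); rewrite defQ cycle_subG.
have Auv : <[u * v]>%G \in atoms G :\ P.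
  rewrite !inE cycle_subG groupM ?(subsetP sPG u Pu) ?(subsetP sQG v Qv) //=.
  rewrite -orderE (order_mul_commute_prime pr_P ou ov cuv nuv) pr_P andbT.
  apply: contraNneq nuv => defPuv; rewrite -defP -[v](mulKg u) groupM ?groupV //.
  by rewrite -defPuv cycle_id.
have Quv : u * v \in Q.
  by rewrite -(atom_sub_join AP AQP Auv) ?cycle_id // cycle_subG groupM.
have Qu : u \in Q by rewrite -(mulgK v u) groupM ?groupV.
by move: neQP; rewrite (prime_subG_eq pr_P pr_Q (_ : P \subset Q)) ?eqxx // defP cycle_subG.
Qed.

Lemma regular_squarefree : squarefree #|G|.
Proof.
apply/squarefreeP=> // q pr_q; apply/negP=> qq_dvd_G.
have [x Gx ox] := Cauchy pr_q (dvdn_trans (dvdn_mulr q (dvdnn q)) qq_dvd_G).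
have [S sylS] := Sylow_exists q G; have /and3P[sSG qS _] := sylS.
have sSx : S \subset <[x]>.
  apply/subsetP=> s Ss; have [-> | nts] := eqVneq s 1; first exact: group1.
  have Gs := subsetP sSG s Ss.
  have os := order_pelt Gs pr_q (mem_p_elt qS Ss) nts.
  have := @atoms_of_same_order <[s]>%G <[x]>%G.
  rewrite !atom_cycle ?os ?ox // => /(_ isT isT (etrans os (esym ox)))/(congr1 val)/= <-.
  exact: cycle_id.
have qq_dvd_S : q ^ 2 %| #|S| by rewrite (card_Hall sylS) p_part dvdn_exp2l // -pfactor_dvdn.
have := leq_trans (dvdn_leq (cardG_gt0 S) qq_dvd_S) (subset_leq_card sSx).
by rewrite -orderE ox -{2}(muln1 q) leq_pmul2l ?prime_gt0 // leqNgt prime_gt1.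
Qed.

Lemma regular_cyclic : cyclic G.
Proof.
apply: order_inj_cyclic => x z Gx Gz oxz.
suff xz : x \in <[z]>.
  by apply/eqP; rewrite eqEcard cycle_subG xz /= -!orderE oxz leqnn.
rewrite -(prod_constt x); apply: group_prod => q _.
have Gxq : x.`_q \in G by rewrite groupX.
have Gzq : z.`_q \in G by rewrite groupX.
have [xq1 | ntxq] := eqVneq x.`_q 1; first by rewrite xq1 group1.
have pr_q : prime q.
  have : 1 < #[x]`_q by rewrite ltn_neqAle part_gt0 andbT eq_sym -order_constt order_eq1.
  by rewrite p_part_gt1 mem_primes => /andP[].
have oxq : #[x.`_q] = q := order_pelt Gxq pr_q (p_elt_constt q x) ntxq.
have ozq : #[z.`_q] = q by rewrite order_constt -oxz -order_constt.
have := @atoms_of_same_order <[x.`_q]>%G <[z.`_q]>%G.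
rewrite !atom_cycle ?oxq ?ozq // => /(_ isT isT (etrans oxq (esym ozq)))/(congr1 val)/= eq_xz.
have szq : <[z.`_q]> \subset <[z]> by rewrite cycle_subG cycle_constt.
by rewrite (subsetP szq) // -eq_xz cycle_id.
Qed.

End SquarefreeElementOrders.

Definition neighbor_order d q := if q %| d then d %/ q else (d * q)%N.

Lemma neighbor_order_dvd n d q :
  d %| n -> prime q -> q %| n -> neighbor_order d q %| n.
Proof.
rewrite /neighbor_order => d_dvd_n pr_q q_dvd_n; case: ifP => q_dvd_d.
  exact: dvdn_trans (dvdn_div q_dvd_d) d_dvd_n.
by rewrite Gauss_dvd ?d_dvd_n // coprime_sym prime_coprime ?q_dvd_d.
Qed.

Lemma neighbor_order_inj d p q : 0 < d -> prime p -> prime q ->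
  neighbor_order d p = neighbor_order d q -> p = q.
Proof.
rewrite /neighbor_order => d_gt0 pr_p pr_q.
have lt_div r : prime r -> d %/ r < d by move=> pr_r; rewrite ltn_Pdiv ?prime_gt1.
have gt_mul r : prime r -> d < d * r by move=> pr_r; rewrite ltn_Pmulr ?prime_gt1.
case: ifP => p_dvd_d; case: ifP => q_dvd_d => eq_pq.
- have dp_gt0 : 0 < d %/ p by rewrite divn_gt0 ?prime_gt0 //; apply: dvdn_leq.
  have /eqP : (d %/ p * p = d %/ p * q)%N by rewrite {2}eq_pq !divnK.
  by rewrite eqn_pmul2l // => /eqP.
- by have := ltn_trans (lt_div p pr_p) (gt_mul q pr_q); rewrite eq_pq ltnn.
- by have := ltn_trans (lt_div q pr_q) (gt_mul p pr_p); rewrite eq_pq ltnn.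
by apply/eqP; rewrite -(eqn_pmul2l d_gt0) eq_pq.
Qed.

Section CyclicSquarefree.
Variables (gT : finGroupType) (a : gT).
Implicit Types H K L : {group gT}.

Local Notation sub_of_order m := <[a ^+ (#[a] %/ m)]>%G.

Lemma sub_of_orderP m K : m %| #[a] ->
  (K \subset <[a]>) && (#|K| == m) = (K == sub_of_order m).
Proof. by move=> m_dvd_a; have /setP/(_ K) := cycle_sub_group m_dvd_a; rewrite !inE. Qed.

Lemma card_sub_of_order m : m %| #[a] -> #|sub_of_order m| = m.
Proof. by move=> m_dvd_a; have /andP[_ /eqP] := etrans (sub_of_orderP _ m_dvd_a) (eqxx _). Qed.

Lemma sub_of_order_unique K : K \subset <[a]> -> K = sub_of_order #|K|.
Proof. by move=> sKa; apply/eqP; rewrite -sub_of_orderP ?sKa ?eqxx ?cardSg. Qed.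

Lemma cycle_covers_prime_index H K : K \subset <[a]> -> covers H K -> prime #|K : H|.
Proof.
move=> sKa /andP[pHK /forallP nHK]; have sHK := proper_sub pHK.
have iKH_gt1 : 1 < #|K : H| by move: pHK; rewrite properE indexg_gt1 => /andP[].
apply: contraR (nHK (sub_of_order (#|H| * pdiv #|K : H|))) => not_pr_iKH.
set q := pdiv _; have pr_q : prime q := pdiv_prime iKH_gt1.
have lt_q : q < #|K : H|.
  rewrite ltn_neqAle (dvdn_leq (ltnW iKH_gt1) (pdiv_dvd _)) andbT.
  by apply: contraNneq not_pr_iKH => <-.
have oK : #|K| = (#|H| * #|K : H|)%N by rewrite Lagrange.
have Hq_dvd_a : #|H| * q %| #[a].
  by rewrite (dvdn_trans _ (cardSg sKa)) // oK dvdn_pmul2l ?pdiv_dvd.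
have sHa := subset_trans sHK sKa; have cyc_a := cycle_cyclic a.
rewrite !properEcard card_sub_of_order // oK ltn_pmul2l // lt_q.
rewrite ltn_Pmulr ?prime_gt1 // !andbT.
rewrite -(cardSg_cyclic cyc_a sHa (cycleX a _)) -(cardSg_cyclic cyc_a (cycleX a _) sKa).
by rewrite card_sub_of_order // oK dvdn_mulr // dvdn_pmul2l ?pdiv_dvd.
Qed.

Lemma cycle_neighbors H : H \subset <[a]> -> squarefree #[a] ->
  [set K : {group gT} | (K \subset <[a]>) && subgraph_edge H K]
  =i [seq sub_of_order (neighbor_order #|H| q) | q <- primes #[a]].
Proof.
move=> sHa sqf_a K; have a_gt0 := order_gt0 a; rewrite inE.
have cyc_a := cycle_cyclic a; have H_gt0 := cardG_gt0 H.
apply/idP/mapP=> [/andP[sKa /orP[cHK | cKH]] | [q]].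
- have pr_q := cycle_covers_prime_index sKa cHK; set q := #|K : H| in pr_q.
  have oK : #|K| = (#|H| * q)%N by rewrite Lagrange // proper_sub //; case/andP: cHK.
  have q_dvd_a : q %| #[a] by rewrite (dvdn_trans _ (cardSg sKa)) // oK dvdn_mull.
  exists q; first by rewrite mem_primes pr_q a_gt0.
  rewrite /neighbor_order ifN -?oK; first exact: sub_of_order_unique.
  apply: contraL sqf_a => q_dvd_H; apply/negP => /(squarefreeP a_gt0)/(_ q pr_q)/negP; apply.
  by rewrite (dvdn_trans _ (cardSg sKa)) // oK mulnC dvdn_pmul2l ?prime_gt0.
- have sKH := proper_sub (proj1 (andP cKH)).
  have pr_q := cycle_covers_prime_index sHa cKH; set q := #|H : K| in pr_q.
  have oH : #|H| = (#|K| * q)%N by rewrite Lagrange.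
  exists q; first by rewrite mem_primes pr_q a_gt0 (dvdn_trans _ (cardSg sHa)) // oH dvdn_mull.
  by rewrite /neighbor_order oH dvdn_mull // mulnK ?prime_gt0 //; apply: sub_of_order_unique.
rewrite mem_primes => /and3P[pr_q _ q_dvd_a] ->.
have m_dvd_a := neighbor_order_dvd (cardSg sHa) pr_q q_dvd_a.
have oL := card_sub_of_order m_dvd_a.
set L := sub_of_order _ in oL *; have sLa : L \subset <[a]> := cycleX a _.
rewrite sLa /subgraph_edge /=; rewrite /neighbor_order in oL; case: ifP oL => q_dvd_H oL.
  rewrite (@covers_card _ L H q) ?orbT ?oL ?divnK //.
  by rewrite -(cardSg_cyclic cyc_a sLa sHa) oL dvdn_div.
rewrite (@covers_card _ H L q) ?oL //.
by rewrite -(cardSg_cyclic cyc_a sHa sLa) oL dvdn_mulr.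
Qed.

Lemma subgraph_degree_cycle H : H \subset <[a]> -> squarefree #[a] ->
  subgraph_degree <[a]>%G H = size (primes #[a]).
Proof.
move=> sHa sqf_a; rewrite /subgraph_degree (eq_card (cycle_neighbors sHa sqf_a)).
rewrite (card_uniqP _) ?size_map // map_inj_in_uniq ?primes_uniq // => p q.
rewrite !mem_primes => /and3P[pr_p _ p_dvd_a] /and3P[pr_q _ q_dvd_a] /(congr1 (fun L => #|gval L|)).
rewrite /= !card_sub_of_order ?neighbor_order_dvd ?cardSg //.
exact: neighbor_order_inj (cardG_gt0 H) pr_p pr_q.
Qed.

End CyclicSquarefree.

Unset Implicit Arguments.

Theorem mainTheorem1 (gT : finGroupType) (G : {group gT}) :
  subgraph_regular G <-> (cyclic G /\ squarefree #|G|).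
Proof.
split=> [regG | [/cyclicP[a defG] sqfG]].
  have sqf_orders := regular_element_orders regG.
  by split; [apply: regular_cyclic sqf_orders regG | apply: regular_squarefree sqf_orders regG].
have -> : G = <[a]>%G by apply: val_inj.
rewrite defG -orderE in sqfG.
by move=> H K; rewrite !inE => sHa sKa; rewrite !subgraph_degree_cycle.
Qed.
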